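(* For any constant $0<\eta\leq 1/4$, every $n$-vertex $d$-regular graph $G$ with $2/\eta\leq d\leq \eta\sqrt{n}$ contains $d$ pairwise vertex-disjoint copies of the star $K_{1,(1-\eta/2)d}$.
   Context: Floors are omitted: $K_{1,(1-\eta/2)d}$ means the star with $\lfloor(1-\eta/2)d\rfloor$ leaves. *)

From HB Require Import structures.
From mathcomp Require Import all_boot all_order all_algebra.
Set Implicit Arguments. Unset Strict Implicit. Unset Printing Implicit Defensive.
Import Order.TTheory GRing.Theory Num.Theory.

Definition simple_graph (V : finType) (e : rel V) : Prop :=
  symmetric e /\ irreflexive e.

Definition regular (V : finType) (e : rel V) (d : nat) : Prop :=
  forall v : V, #|[set w | e v w]| = d.

Definition star_copy (V : finType) (e : rel V) (m : nat) (c : V) (L : {set V}) : Prop :=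
  #|L| = m /\ (forall x, x \in L -> e c x).

Definition has_disjoint_stars (V : finType) (e : rel V) (k m : nat) : Prop :=
  exists (c : 'I_k -> V) (L : 'I_k -> {set V}),
    (forall i, star_copy e m (c i) (L i)) /\
    (forall i j, i != j -> [disjoint (c i |: L i) & (c j |: L j)]).

From HB Require Import structures.
From mathcomp Require Import all_boot all_order all_algebra.
From mathcomp Require Import reals lra zify.
Import Order.TTheory GRing.Theory Num.Theory.

Set Implicit Arguments.
Unset Strict Implicit.
Unset Printing Implicit Defensive.

(* Greedily choose stars K_{1,m}, m = floor((1 - eta/2) d), each centred outside
   the set U of vertices already used.  If no vertex outside U has m neighbours
   outside U, every vertex outside U has more than d - m neighbours in U, and
   double counting the edges into U gives (n - |U|)(d - m + 1) <= |U| d.  But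
   |U| < d (m + 1) <= d^2 <= eta^2 n, and then 2 |U| < eta (n - |U|) while
   eta d <= 2 (d - m + 1), a contradiction.  So the greedy process finds d stars. *)

Lemma subset_of_card (T : finType) (A : {set T}) m :
  m <= #|A| -> exists2 B : {set T}, B \subset A & #|B| = m.
Proof.
move=> le_mA; exists [set x in take m (enum A)].
  by apply/subsetP => x; rewrite inE => /mem_take; rewrite mem_enum.
rewrite cardsE; have /card_uniqP -> := take_uniq m (enum_uniq (mem A)).
by rewrite size_takel -?cardE.
Qed.

Lemma card_setI_sum (T : finType) (P : pred T) (A : {set T}) :
  #|[set x | P x] :&: A| = \sum_(x in A) (P x : nat).
Proof.
rewrite -sum1_card big_mkcond [RHS]big_mkcond /=; apply: eq_bigr => x _.
by rewrite !inE andbC; case: (x \in A); case: (P x).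
Qed.

Section GreedyStars.

Variables (V : finType) (e : rel V) (d m : nat).
Hypotheses (sym_e : symmetric e) (reg_e : regular e d) (le_md : m <= d).

(* Double counting of the edges between [~: U] and [U]. *)
Lemma card_setC_le_of_small_outdegree (U : {set V}) :
  (forall v, v \notin U -> #|[set w | e v w] :\: U| < m) ->
  #|~: U| * (d - m).+1 <= #|U| * d.
Proof.
move=> small_out; rewrite -sum_nat_const.
apply: (@leq_trans (\sum_(v in ~: U) \sum_(w in U) (e v w : nat))).
  apply: leq_sum => v; rewrite inE => vNU; rewrite -card_setI_sum.
  by have := cardsID U [set w | e v w]; rewrite reg_e; have := small_out v vNU; lia.
rewrite exchange_big -sum_nat_const; apply: leq_sum => w _.
under eq_bigr => v _ do rewrite sym_e.
by rewrite -card_setI_sum -(reg_e w) subset_leq_card ?subsetIl.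
Qed.

Definition star_vertices (p : V * {set V}) := p.1 |: p.2.

Definition disjoint_star_seq (s : seq (V * {set V})) :=
  [/\ forall p, p \in s -> star_copy e m p.1 p.2 &
      pairwise (fun p q => [disjoint star_vertices p & star_vertices q]) s].

Lemma has_disjoint_stars_of_seq s :
  disjoint_star_seq s -> has_disjoint_stars e (size s) m.
Proof.
case=> stars_s disj_s; pose t := in_tuple s.
exists (fun i => (tnth t i).1), (fun i => (tnth t i).2); split.
  by move=> i; apply: stars_s; apply: mem_tnth.
move=> i j neq_ij; have x0 := tnth t i; rewrite !(tnth_nth x0).
have disj_ij k l : k < l -> l < size s ->
    [disjoint star_vertices (nth x0 s k) & star_vertices (nth x0 s l)].
  move=> lt_kl lt_ls; apply: (pairwiseP x0 disj_s) => //.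
  by rewrite inE (ltn_trans lt_kl).
case: (ltngtP i j) => [lt_ij | lt_ji | /val_inj eq_ij]; first exact: disj_ij.
  by rewrite disjoint_sym; apply: disj_ij.
by rewrite eq_ij eqxx in neq_ij.
Qed.

Lemma exists_star_outside (U : {set V}) :
  #|U| * d < #|~: U| * (d - m).+1 ->
  exists c L, star_copy e m c L /\ c |: L \subset ~: U.
Proof.
move=> U_small.
have [/existsP [c /andP [cNU big_out]] | /existsPn none] :=
  boolP [exists c, (c \notin U) && (m <= #|[set w | e c w] :\: U|)]; last first.
  suff : #|~: U| * (d - m).+1 <= #|U| * d by rewrite leqNgt U_small.
  by apply: card_setC_le_of_small_outdegree => v vNU; have := none v; rewrite vNU ltnNge.
have [L sub_L card_L] := subset_of_card big_out.
exists c, L; split.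
  by split=> // x /(subsetP sub_L); rewrite !inE => /andP [].
rewrite subUset sub1set inE cNU; apply: subset_trans sub_L _.
by apply/subsetP => x; rewrite !inE => /andP [].
Qed.

Lemma greedy_disjoint_stars k :
  (forall u, u < k * m.+1 -> u * d < (#|V| - u) * (d - m).+1) ->
  has_disjoint_stars e k m.
Proof.
move=> count_ok.
suff [s [size_s /has_disjoint_stars_of_seq]] : exists s, size s = k /\ disjoint_star_seq s.
  by rewrite size_s.
suff packing j : j <= k -> exists s (U : {set V}),
    [/\ size s = j, disjoint_star_seq s,
        {in s, forall p, star_vertices p \subset U} & #|U| <= j * m.+1].
  by have [s [U [size_s ds _ _]]] := packing k (leqnn k); exists s.
elim: j => [_ | j IH lt_jk]; first by exists [::], set0; rewrite cards0.
have [s [U [size_s [stars_s disj_s] sub_U card_U]]] := IH (ltnW lt_jk).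
have [c [L [star_cL sub_cL]]] : exists c L, star_copy e m c L /\ c |: L \subset ~: U.
  apply: exists_star_outside.
  have -> : #|~: U| = #|V| - #|U| by rewrite -(cardsC U) addKn.
  apply: count_ok; apply: leq_ltn_trans card_U _; rewrite ltn_mul2r; lia.
exists ((c, L) :: s), ((c |: L) :|: U); split => /=.
- by rewrite size_s.
- split; first by move=> p; rewrite inE => /predU1P [-> | /stars_s].
  rewrite /= disj_s andbT; apply/allP => p /sub_U sub_p.
  by rewrite disjoints_subset (subset_trans sub_cL) ?setCS.
- move=> p; rewrite inE => /predU1P [-> | /sub_U sub_p]; first exact: subsetUl.
  exact: subset_trans sub_p (subsetUr _ _).
- apply: leq_trans (leq_card_setU _ _) _; rewrite mulSn leq_add //.
  by rewrite cardsU1; case: star_cL => -> _; case: (c \notin L).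
Qed.

End GreedyStars.

Local Open Scope ring_scope.

Lemma greedy_condition_bound (R : realFieldType) (eta d n m u : R) :
  0 < eta -> eta <= 1 / 4 -> 2 / eta <= d -> d * d <= eta ^+ 2 * n ->
  0 <= m -> m <= (1 - eta / 2) * d -> 0 <= u -> u < d * (m + 1) ->
  u * d < (n - u) * (d - m + 1).
Proof.
move=> eta_gt0 eta_le dlo dhi m_ge0 m_le u_ge0 u_lt.
have eta_d : 2 <= d * eta by rewrite -ler_pdivrMr.
have d_gt0 : 0 < d by nra.
have m1_le_d : m + 1 <= d by lra.
have u_lt_dd : u < d * d by apply: lt_le_trans u_lt _; rewrite ler_pM2l.
have u_lt_n : u * (2 + eta) < eta * n.
  have : eta * (2 + eta) <= 1 by nra.
  nra.
have eta_d_le : eta * d <= 2 * (d - m + 1) by lra.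
have nu_gt0 : 0 < n - u by nra.
have two_u : 2 * u < (n - u) * eta by lra.
have : 2 * u * d < (n - u) * eta * d by rewrite ltr_pM2r.
have : (n - u) * (eta * d) <= (n - u) * (2 * (d - m + 1)) by rewrite ler_pM2l.
lra.
Qed.

Theorem lemma6p1 (R : realType) (eta : R) (V : finType) (e : rel V) (d : nat) :
  0 < eta -> eta <= 1 / 4 ->
  simple_graph e -> regular e d ->
  2 / eta <= (d%:R : R) -> (d%:R : R) <= eta * Num.sqrt (#|V|%:R : R) ->
  has_disjoint_stars e d (Num.truncn ((1 - eta / 2) * d%:R)).
Proof.
move=> eta_gt0 eta_le [sym_e _] reg_e dlo dhi.
set m := Num.truncn _.
have d_ge0 : 0 <= d%:R :> R := ler0n _ _.
have m_le : m%:R <= (1 - eta / 2) * d%:R :> R.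
  by rewrite truncn_le; apply: mulr_ge0 => //; lra.
have d2_le : d%:R * d%:R <= eta ^+ 2 * #|V|%:R :> R.
  rewrite -[#|V|%:R](@sqr_sqrtr R) ?ler0n // -exprMn -expr2.
  by rewrite ler_pXn2r ?nnegrE // mulr_ge0 ?sqrtr_ge0 ?ltW.
have le_md : (m <= d)%N by rewrite -(ler_nat R); nra.
apply: (greedy_disjoint_stars sym_e reg_e le_md) => u lt_u.
have lt_uR : u%:R < d%:R * (m%:R + 1) :> R by rewrite natr1 -natrM ltr_nat.
have bound :=
  greedy_condition_bound eta_gt0 eta_le dlo d2_le (ler0n _ m) m_le (ler0n _ u) lt_uR.
have le_mdR : m%:R <= d%:R :> R by rewrite ler_nat.
have le_uV : (u <= #|V|)%N.
  by rewrite -(ler_nat R); have := ler0n R u; nra.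
by move: bound; rewrite -(ltr_nat R) !natrM -natr1 !natrB.
Qed.
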